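(* For every hypergraph $\mathcal{H}=(Q,\mathcal{S})$ with all hyperedges nonempty and $S_n=Q$, the graph $G'_{\mathcal{H}}$ is $(P_2+P_4)$-free.
   Context: A hypergraph $\mathcal{H}=(Q,\mathcal{S})$ has element set $Q=\{q_1,\dots,q_m\}$ and hyperedges $\mathcal{S}=\{S_1,\dots,S_n\}$, $S_j\subseteq Q$. The graph $G_{\mathcal{H}}$ has vertex set $Q\cup\mathcal{S}\cup\mathcal{S}'\cup\{t_1,t_2\}$, where $\mathcal{S}'=\{S_1',\dots,S_n'\}$ is a set of $n$ new vertices, and edges: $q_iS_j$ and $q_iS_j'$ whenever $q_i\in S_j$; $S_jS_\ell'$ for all $j,\ell$; $q_hq_i$ for all distinct $h,i$; $t_1S_j$ and $t_2S_j'$ for all $j$; no other edges. $G'_{\mathcal{H}}$ is obtained from $G_{\mathcal{H}}$ by adding the edge $t_1t_2$. $P_2+P_4$ is the disjoint union of a path on 2 and a path on 4 vertices; $H$-free means no induced subgraph isomorphic to $H$. *)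

From HB Require Import structures.
From mathcomp Require Import all_boot.
Set Implicit Arguments. Unset Strict Implicit. Unset Printing Implicit Defensive.

(* Hypergraph H = (Q, S): Q = 'I_m (q_i <-> i), hyperedges S_1..S_{n} are
   given by a family S : 'I_n -> {set 'I_m} (here n = k.+1, so that
   the last hyperedge S_n is S ord_max). *)

Inductive gvert (m n : nat) :=
| VQ of 'I_m
| VS of 'I_n
| VSp of 'I_n
| VT1
| VT2.

Definition gvert_enc m n (v : gvert m n) : ('I_m + 'I_n + 'I_n) + bool :=
  match v with
  | VQ i => inl (inl (inl i))
  | VS j => inl (inl (inr j))
  | VSp j => inl (inr j)
  | VT1 => inr true
  | VT2 => inr false
  end.
Definition gvert_dec m n (x : ('I_m + 'I_n + 'I_n) + bool) : gvert m n :=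
  match x with
  | inl (inl (inl i)) => @VQ m n i
  | inl (inl (inr j)) => @VS m n j
  | inl (inr j) => @VSp m n j
  | inr true => @VT1 m n
  | inr false => @VT2 m n
  end.
Lemma gvert_encK m n : cancel (@gvert_enc m n) (@gvert_dec m n).
Proof. by case. Qed.
HB.instance Definition _ m n := Finite.copy (gvert m n) (can_type (@gvert_encK m n)).

(* Directed "generating" edges of G'_H; adjacency is their symmetric closure. *)
Definition gedge m n (S : 'I_n -> {set 'I_m}) (x y : gvert m n) : bool :=
  match x, y with
  | VQ h, VQ i => h != i
  | VQ i, VS j => i \in S j
  | VQ i, VSp j => i \in S j
  | VS _, VSp _ => true
  | VT1, VS _ => true
  | VT2, VSp _ => true
  | VT1, VT2 => true                     (* extra edge t1 t2 of G'_H *)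
  | _, _ => false
  end.

Definition Gp_adj m n (S : 'I_n -> {set 'I_m}) : rel (gvert m n) :=
  fun x y => gedge S x y || gedge S y x.

Definition P2P4_adj : rel 'I_6 :=
  fun i j =>
    let a := nat_of_ord i in let b := nat_of_ord j in
    [|| (a == 0) && (b == 1), (a == 1) && (b == 0),
        (a == 2) && (b == 3), (a == 3) && (b == 2),
        (a == 3) && (b == 4), (a == 4) && (b == 3),
        (a == 4) && (b == 5) | (a == 5) && (b == 4)].

Definition has_induced_P2P4 (T : finType) (adj : rel T) : Prop :=
  exists f : 'I_6 -> T, injective f /\
    forall i j : 'I_6, adj (f i) (f j) = P2P4_adj i j.

Definition P2P4_free (T : finType) (adj : rel T) : Prop :=
  ~ has_induced_P2P4 adj.

(* Outside [Q], the graph G'_H is the complete bipartite graph between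
   [S ∪ {t2}] and [S' ∪ {t1}], while [Q] is a clique.  In P2+P4 a clique has at
   most 2 vertices, and a set inducing a complete bipartite or an edgeless graph
   has at most 3, so P2+P4 is not an induced subgraph of G'_H. *)
From mathcomp Require Import all_boot.
Set Implicit Arguments. Unset Strict Implicit. Unset Printing Implicit Defensive.

(* [None] marks the clique, [Some b] side [b] of the complete bipartite graph;
   edges between the clique and the rest are unconstrained. *)
Definition side_compatible (e : bool) (a b : option bool) : bool :=
  match a, b with
  | None, None => e
  | Some a, Some b => e == (a != b)
  | _, _ => true
  end.

Definition clique_and_biclique (T : finType) (adj : rel T) (c : T -> option bool) :=
  forall x y, x != y -> side_compatible (adj x y) (c x) (c y).

Lemma clique_and_biclique_induced (T U : finType) (adj : rel T) (adjU : rel U)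
    (c : T -> option bool) (f : U -> T) :
  injective f -> (forall u v, adj (f u) (f v) = adjU u v) ->
  clique_and_biclique adj c -> clique_and_biclique adjU (c \o f).
Proof.
move=> inj_f adj_f c_adj u v neq_uv; rewrite /= -adj_f.
by apply: c_adj; rewrite (inj_eq inj_f).
Qed.

Lemma P2P4_not_clique_and_biclique (c : 'I_6 -> option bool) :
  ~ clique_and_biclique P2P4_adj c.
Proof.
move=> c_adj.
have pair i j (i6 : i < 6) (j6 : j < 6) : i < j ->
    side_compatible (P2P4_adj (Ordinal i6) (Ordinal j6))
      (c (Ordinal i6)) (c (Ordinal j6)).
  by move=> lt_ij; apply: c_adj; rewrite -val_eqE /= ltn_eqF.
move: (pair 0 1 isT isT isT) (pair 0 2 isT isT isT) (pair 0 3 isT isT isT)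
  (pair 0 4 isT isT isT) (pair 0 5 isT isT isT) (pair 1 2 isT isT isT)
  (pair 1 3 isT isT isT) (pair 1 4 isT isT isT) (pair 1 5 isT isT isT)
  (pair 2 3 isT isT isT) (pair 2 4 isT isT isT) (pair 2 5 isT isT isT)
  (pair 3 4 isT isT isT) (pair 3 5 isT isT isT) (pair 4 5 isT isT isT).
rewrite /P2P4_adj /=.
by do 6! case: (c _) => [[]|].
Qed.

Definition Gp_side m n (v : gvert m n) : option bool :=
  match v with
  | VQ _ => None
  | VS _ | VT2 => Some true
  | VSp _ | VT1 => Some false
  end.

Lemma Gp_clique_and_biclique m n (S : 'I_n -> {set 'I_m}) :
  clique_and_biclique (Gp_adj S) (@Gp_side m n).
Proof.
case=> [h|j|j||]; case=> [i|l|l||] //= neq_xy; rewrite /Gp_adj /= ?orbF ?orbT //.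
by apply/orP; left; apply: contraNneq neq_xy => ->.
Qed.

Theorem lemma34 (m k : nat) (S : 'I_k.+1 -> {set 'I_m}) :
  (forall j, S j != set0) ->
  S ord_max = setT ->
  P2P4_free (Gp_adj S).
Proof.
move=> _ _ [f [inj_f adj_f]].
exact: P2P4_not_clique_and_biclique
  (clique_and_biclique_induced inj_f adj_f (Gp_clique_and_biclique S)).
Qed.
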